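(* Let $S\subseteq M_n$ be a noncommutative graph. Then $\mathcal{H}(S)$ equals the minimum $k$ such that there exist $m\in\mathbb{N}$ and matrices $E_1,\dots,E_m,F_1,\dots,F_m\in M_{k\times n}$ with $\sum_{i=1}^m F_i^\dagger E_i=I_n$ (equivalently, the linear map $\Psi:M_n\to M_k$, $\Psi(X)=\sum_{i=1}^m E_iXF_i^\dagger$, is trace-preserving) and $T_\Psi:=\mathrm{span}\{F_i^\dagger E_j:\ i,j\in[m]\}\subseteq S$.
   Context: All scalars are complex; $M_{k\times n}$ denotes complex $k\times n$ matrices and $M_n=M_{n\times n}$. A noncommutative graph is a linear subspace $S\subseteq M_n$ that contains $I_n$ and is closed under conjugate transpose. For a subspace $S\subseteq M_n$, $M_m(S)$ denotes the set of $m\times m$ block matrices $B=[B_{i,j}]_{i,j\in[m]}$ with every block $B_{i,j}\in S$, viewed as elements of $M_{mn}$. The Haemers bound is $\mathcal{H}(S)=\min\{\mathrm{rk}(B):\ m\in\mathbb{N},\ B\in M_m(S),\ \sum_{i=1}^m B_{i,i}=I_n\}$. Every trace-preserving linear map $M_n\to M_k$ can be written as $X\mapsto\sum_i E_iXF_i^\dagger$ with $\sum_i F_i^\dagger E_i=I_n$. *)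

From HB Require Import structures.
From mathcomp Require Import all_boot all_order all_algebra.
From mathcomp Require Import reals.
From mathcomp Require Import complex.
Set Implicit Arguments. Unset Strict Implicit. Unset Printing Implicit Defensive.
Import Order.TTheory GRing.Theory Num.Theory.
Local Open Scope ring_scope.

Definition mxadj (C : numClosedFieldType) (p q : nat) (A : 'M[C]_(p, q)) : 'M[C]_(q, p) :=
  (map_mx Num.conj A)^T.

Definition nc_graph (C : numClosedFieldType) (n : nat) (S : {vspace 'M[C]_n}) : Prop :=
  (1%:M \in S) /\ (forall A : 'M[C]_n, A \in S -> mxadj A \in S).

Definition haemers_feasible (C : numClosedFieldType) (n : nat)
    (S : {vspace 'M[C]_n}) (r : nat) : Prop :=
  exists (m : nat) (B : 'I_m -> 'I_m -> 'M[C]_n),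
    (forall i j, B i j \in S) /\
    \sum_(i < m) B i i = 1%:M /\
    \rank (\mxblock_(i < m, j < m) B i j) = r.

Definition T_Psi (C : numClosedFieldType) (n k m : nat)
    (E F : 'I_m -> 'M[C]_(k, n)) : {vspace 'M[C]_n} :=
  <<[seq mxadj (F i) *m E j | i <- enum 'I_m, j <- enum 'I_m]>>%VS.

Definition kraus_feasible (C : numClosedFieldType) (n : nat)
    (S : {vspace 'M[C]_n}) (k : nat) : Prop :=
  exists (m : nat) (E F : 'I_m -> 'M[C]_(k, n)),
    \sum_(i < m) mxadj (F i) *m E i = 1%:M /\
    (T_Psi E F <= S)%VS.

Definition is_min (P : nat -> Prop) (k : nat) : Prop :=
  P k /\ forall k', P k' -> (k <= k')%N.

Definition haemers_is (C : numClosedFieldType) (n : nat)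
    (S : {vspace 'M[C]_n}) (h : nat) : Prop :=
  is_min (haemers_feasible S) h.

(* A Haemers witness B in M_m(S) of rank r factors through C^r: its block
   columns and block rows give matrices X_i in M_(n x r) and Y_j in M_(r x n)
   with B_ij = X_i Y_j.  Taking E_j = Y_j and F_i = X_i^dagger yields a
   trace-preserving map into M_r with T_Psi spanned by the B_ij, hence inside S.
   Conversely the blocks F_i^dagger E_j of a feasible map form a Haemers witness
   that factors through C^k, so its rank is at most k.  The two sets of feasible
   dimensions therefore have the same minimum. *)

From HB Require Import structures.
From mathcomp Require Import all_boot all_order all_algebra.
From mathcomp Require Import reals.
From mathcomp Require Import complex.
Local Open Scope ring_scope.
Import GRing.Theory Num.Theory.

Lemma is_min_transfer (P Q : nat -> Prop) (h : nat) :
  (forall r, P r -> Q r) -> (forall k, Q k -> exists2 r, P r & (r <= k)%N) ->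
  is_min P h <-> is_min Q h.
Proof.
move=> PQ QP; split=> [[Ph minP] | [Qh minQ]].
  split=> [|k /QP [r Pr le_rk]]; first exact: PQ.
  exact: leq_trans (minP r Pr) le_rk.
have [r Pr le_rh] := QP h Qh.
have eq_rh : r = h by apply/eqP; rewrite eqn_leq le_rh minQ //; exact: PQ.
split=> [|r' /PQ]; [by rewrite -eq_rh | exact: minQ].
Qed.

Section BlockFactorization.
Context {F : fieldType} {m m' p q : nat}.

Lemma mxblock_factor_rank (B : 'I_m -> 'I_m' -> 'M[F]_(p, q)) :
  let r := \rank (\mxblock_(i < m, j < m') B i j) in
  exists (X : 'I_m -> 'M[F]_(p, r)) (Y : 'I_m' -> 'M[F]_(r, q)),
    forall i j, B i j = X i *m Y j.
Proof.
set M := \mxblock_(i < m, j < m') B i j.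
exists (submxcol (col_base M)), (submxrow (row_base M)) => i j.
rewrite -[LHS](mxblockK B) -/M -[in LHS](mulmx_base M).
by rewrite submxblockEv -submxcol_mul -mul_submxrow.
Qed.

Lemma rank_mxblock_mul_le k (X : 'I_m -> 'M[F]_(p, k)) (Y : 'I_m' -> 'M[F]_(k, q)) :
  (\rank (\mxblock_(i < m, j < m') (X i *m Y j)) <= k)%N.
Proof.
rewrite -mul_mxcol_mxrow.
exact: leq_trans (mxrankM_maxr _ _) (rank_leq_row _).
Qed.

End BlockFactorization.

Section HaemersKraus.
Variables (C : numClosedFieldType) (n : nat) (S : {vspace 'M[C]_n}).

Lemma mxadjK p q (A : 'M[C]_(p, q)) : mxadj (mxadj A) = A.
Proof. by apply/matrixP => i j; rewrite !mxE conjCK. Qed.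

Lemma T_Psi_subvP k m (E F : 'I_m -> 'M[C]_(k, n)) :
  reflect (forall i j, mxadj (F i) *m E j \in S) (T_Psi E F <= S)%VS.
Proof.
apply: (iffP span_subvP) => [TS i j | FES _ /allpairsP[[i j] [_ _ ->]] //].
by apply: TS; apply: allpairs_f; rewrite mem_enum.
Qed.

Lemma haemers_kraus_feasible r : haemers_feasible S r -> kraus_feasible S r.
Proof.
case=> m [B [BS [sumB <-]]].
have [X [Y BE]] := mxblock_factor_rank B.
exists m, Y, (fun i => mxadj (X i)); split.
  by rewrite -sumB; apply: eq_bigr => i _; rewrite mxadjK BE.
by apply/T_Psi_subvP => i j; rewrite mxadjK -BE.
Qed.

Lemma kraus_haemers_feasible k :
  kraus_feasible S k -> exists2 r, haemers_feasible S r & (r <= k)%N.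
Proof.
case=> m [E [F [sumFE /T_Psi_subvP FES]]].
exists (\rank (\mxblock_(i < m, j < m) (mxadj (F i) *m E j))).
  by exists m, (fun i j => mxadj (F i) *m E j); split; last split.
exact: rank_mxblock_mul_le.
Qed.

End HaemersKraus.

Theorem mainTheorem6 (R : realType) (n : nat) (S : {vspace 'M[R[i]]_n}) :
  nc_graph S ->
  forall h : nat, haemers_is S h <-> is_min (kraus_feasible S) h.
Proof.
move=> _ h; apply: is_min_transfer.
  exact: haemers_kraus_feasible.
exact: kraus_haemers_feasible.
Qed.
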